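(* Let $m,n\ge1$, $q=2^m$, and let \[L(x)=\sum_{i=0}^{m-1}L_i\big(x^{2^i}\big),\] where each $L_i$ is a $q$-linear polynomial over $\mathbb F_{q^n}$. Then: (i) $L^\prime(\ker\mathrm{Tr})\subseteq\ker\mathrm{Tr}$ if and only if $L_i(1)\in\mathbb F_q$ for $0\le i<m$; in this case there exists a unique map $l$ on $\mathbb F_q$ such that $\mathrm{Tr}(L^\prime(x))=l(\mathrm{Tr}(x))$ for all $x\in\mathbb F_{q^n}$, namely \[l(x)=\sum_{i=0}^{m-1}(L_i(1)x)^{2^{m-i}};\] (ii) if $L^\prime(\ker\mathrm{Tr})\subseteq\ker\mathrm{Tr}$, then $L^\prime$ induces a well-defined endomorphism of the additive quotient group $\mathbb F_{q^n}/\ker\mathrm{Tr}$ via $\ker\mathrm{Tr}+\alpha\mapsto\ker\mathrm{Tr}+L^\prime(\alpha)$, and this endomorphism is an automorphism if and only if the map $l$ from (i) is a linear automorphism of $\mathbb F_q$ as a vector space over $\mathbb F_2$; (iii) $|L^\prime(\ker\mathrm{Tr})|=|\ker\mathrm{Tr}|$ if and only if $\ker\mathrm{Tr}\cap\ker L^\prime=\{0\}$.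
   Context: $\mathrm{Tr}$ denotes the trace map of $\mathbb F_{q^n}$ over $\mathbb F_q$. Polynomials are regarded as maps on $\mathbb F_{q^n}$. A $q$-linear polynomial over $\mathbb F_{q^n}$ has the form $\sum_{j=0}^{n-1}a_jx^{q^j}$ with $a_j\in\mathbb F_{q^n}$. For a $2$-linear polynomial $L(x)=\sum_{j=0}^{mn-1}a_jx^{2^j}$ over $\mathbb F_{q^n}$, its adjoint is $L^\prime(x)=\sum_{j}(a_jx)^{2^{-j}}$, where $y\mapsto y^{2^{-j}}$ is the inverse of the automorphism $y\mapsto y^{2^j}$ of $\mathbb F_{q^n}$. $\ker$ denotes the kernel of an additive map. *)

From HB Require Import structures.
From mathcomp Require Import all_boot all_order all_algebra all_field.
Set Implicit Arguments. Unset Strict Implicit. Unset Printing Implicit Defensive.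
Import GRing.Theory.
Local Open Scope ring_scope.

(* Setting: F is a finite field of characteristic 2 with #|F| = 2^(m*n),
   i.e. F = F_{q^n} with q = 2^m.  F_q is the subfield {x | x^q = x}. *)
Section Defs.
Variables (m n : nat) (F : finFieldType).

Definition Fq : {set F} := [set x : F | x ^+ (2 ^ m) == x].

Definition Tr (x : F) : F := \sum_(j < n) x ^+ (2 ^ (m * j)).

Definition KerTr : {set F} := [set x : F | Tr x == 0].

Definition qlin (c : nat -> F) (x : F) : F := \sum_(j < n) c j * x ^+ (2 ^ (m * j)).

(* a i j = coefficient of x^(q^j) in L_i ; L(x) = sum_{i<m} L_i(x^(2^i)) *)
Definition Li (a : nat -> nat -> F) (i : nat) : F -> F := qlin (a i).
Definition Lmap (a : nat -> nat -> F) (x : F) : F :=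
  \sum_(i < m) Li a i (x ^+ (2 ^ i)).

(* L written as a 2-linear polynomial sum_{k < mn} b_k x^(2^k):
   since 2^i q^j = 2^(i + m j), b_(i + m j) = a i j. *)
Definition Lcoef (a : nat -> nat -> F) (k : nat) : F := a (k %% m)%N (k %/ m)%N.

(* the inverse of the automorphism y |-> y^(2^k) of F (#|F| = 2^(mn)) *)
Definition frobinv (k : nat) (y : F) : F := y ^+ (2 ^ (m * n - k %% (m * n))).

(* adjoint L'(x) = sum_k (b_k x)^(2^-k) *)
Definition Ladj (a : nat -> nat -> F) (x : F) : F :=
  \sum_(k < m * n) frobinv k (Lcoef a k * x).

Definition KerLadj (a : nat -> nat -> F) : {set F} := [set x : F | Ladj a x == 0].

Definition lmap (a : nat -> nat -> F) (x : F) : F :=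
  \sum_(i < m) (Li a i 1 * x) ^+ (2 ^ (m - i)).

(* The map K + alpha |-> K + f alpha on the additive quotient F / K is well defined *)
Definition induced_well_defined (K : {set F}) (f : F -> F) : Prop :=
  forall a b : F, a - b \in K -> f a - f b \in K.

(* ... and is bijective (an automorphism of the quotient group): injective and
   surjective on cosets *)
Definition induced_bijective (K : {set F}) (f : F -> F) : Prop :=
  (forall a b : F, f a - f b \in K -> a - b \in K) /\
  (forall b : F, exists a : F, f a - b \in K).

(* f is an F_2-linear automorphism of the F_2-space S (F_2-linear = additive) *)
Definition F2_lin_aut (S : {set F}) (f : F -> F) : Prop :=
  [/\ {in S, forall x, f x \in S},
      {in S &, forall x y, f (x + y) = f x + f y},
      {in S &, injective f} &
      {in S, forall y, exists2 x, x \in S & f x = y}].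

End Defs.

From Pilot Require Import Defs.
From HB Require Import structures.
From mathcomp Require Import all_boot all_order all_algebra all_field.
From mathcomp Require Import zify.
Set Implicit Arguments.
Unset Strict Implicit.
Unset Printing Implicit Defensive.
Import GRing.Theory.
Local Open Scope ring_scope.

(* Writing c_i = L_i(1) = sum_j a_ij, a direct computation gives
   Tr(L'(x)) = sum_i Tr(c_i x)^(2^(m-i)).  If every c_i lies in F_q this is
   l(Tr x); since Tr maps F_{q^n} onto F_q with kernel ker Tr, the quotient
   F_{q^n} / ker Tr is identified with F_q and the map induced by L' with l,
   which gives (i) and (ii).  Conversely, on the elements z^q + z of ker Tr we
   get sum_i Tr(d_i z)^(2^(m-i)) = 0 for all z, where d_i = c_i^(q^(n-1)) + c_i.
   After taking a square root and expanding the traces, this is a polynomial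
   identity in z whose exponents 2^(m-i-1+mj) are pairwise distinct and below
   q^n = #|F|, so all its coefficients vanish: d_i = 0, i.e. c_i^q = c_i.
   Part (iii) says that an additive map is injective on a subgroup iff its
   kernel meets that subgroup trivially. *)

Lemma divmod_inj d i1 i2 j1 j2 : (i1 < d)%N -> (i2 < d)%N ->
  (i1 + d * j1 = i2 + d * j2)%N -> i1 = i2 /\ j1 = j2.
Proof.
move=> lt1 lt2 e; have d_gt0 : (0 < d)%N by case: d lt1 {lt2 e}.
have := congr1 (modn^~ d) e; have := congr1 (divn^~ d) e.
rewrite /= !(addnC i1) !(addnC i2) !(mulnC d) !divnMDl // !divn_small // !addn0.
by rewrite !modnMDl !modn_small.
Qed.

Lemma divmod_lt d i j N : (i < d)%N -> (j < N)%N -> (i + d * j < d * N)%N.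
Proof.
move=> lt_i lt_j; apply: (@leq_trans (d * j.+1)); first by rewrite mulnS; lia.
by rewrite leq_mul2l lt_j orbT.
Qed.

Lemma sum_ord_mul (V : nmodType) (f : nat -> V) d N :
  \sum_(k < d * N) f k = \sum_(j < N) \sum_(i < d) f (i + d * j)%N.
Proof.
elim: N => [|N IH]; first by rewrite muln0 !big_ord0.
rewrite big_ord_recr /= -IH mulnS addnC -!(big_mkord xpredT).
rewrite (big_cat_nat _ (leq_addr d (d * N)%N)) //=; congr (_ + _).
by rewrite -{1}(add0n (d * N)%N) big_addn addKn big_mkord.
Qed.

Lemma morphB_of_morphD (V W : zmodType) (h : V -> W) :
  {morph h : x y / x + y} -> {morph h : x y / x - y}.
Proof.
move=> hD x y; have h0 : h 0 = 0 by apply: (addrI (h 0)); rewrite -hD !addr0.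
have hN : h (- y) = - h y by apply: (addrI (h y)); rewrite -hD !subrr.
by rewrite hD hN.
Qed.

Lemma card_imset_kernel (V W : finZmodType) (U : zmodType) (T : V -> U) (f : V -> W) :
  {morph T : x y / x + y} -> {morph f : x y / x + y} ->
  #|f @: [set x | T x == 0]| = #|[set x | T x == 0]| <->
  [set x | T x == 0] :&: [set x | f x == 0] = [set 0].
Proof.
move=> /morphB_of_morphD TB /morphB_of_morphD fB.
have T0 : T 0 = 0 by rewrite -(subrr (0 : V)) TB subrr.
have f0 : f 0 = 0 by rewrite -(subrr (0 : V)) fB subrr.
split=> [/eqP/imset_injP f_inj | ker0].
  apply/setP => x; rewrite !inE; apply/andP/eqP => [[Tx fx] | ->].
    by apply: f_inj; rewrite ?inE ?T0 ?f0 ?(eqP fx).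
  by rewrite T0 f0.
apply: card_in_imset => x y; rewrite !inE => Tx Ty fxy; apply/eqP.
by rewrite -subr_eq0 -in_set1 -ker0 !inE TB fB fxy (eqP Tx) (eqP Ty) !subrr !eqxx.
Qed.

Lemma vanishing_sparse_poly_coef_eq0 (F : finFieldType) (I : finType)
    (b : I -> F) (e : I -> nat) :
  injective e -> (forall k, e k < #|F|)%N ->
  (forall z : F, \sum_k b k * z ^+ e k = 0) -> forall k, b k = 0.
Proof.
move=> e_inj e_lt vanish k0.
pose p : {poly F} := \sum_k b k *: 'X^(e k).
have p0 : p = 0.
  apply: (@roots_geq_poly_eq0 _ p (enum F)); last 1 first.
  - rewrite -cardE; apply: (leq_trans (size_sum _ _ _)).
    apply/bigmax_leqP => k _.
    by apply: (leq_trans (size_scale_leq _ _)); rewrite size_polyXn.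
  - apply/allP => z _; rewrite /root /p horner_sum -[X in _ == X](vanish z).
    by apply/eqP/eq_bigr => k _; rewrite hornerZ hornerXn.
  - exact: enum_uniq.
have := congr1 (fun q : {poly F} => q`_(e k0)) p0.
rewrite /= coef0 /p coef_sumMXn (big_pred1 k0) // => k /=.
by apply/eqP/eqP => [/e_inj | ->].
Qed.

Section Intertwining.

Variables (F : finFieldType) (S : {set F}) (T f g : F -> F).
Hypotheses (TD : {morph T : x y / x + y}) (fD : {morph f : x y / x + y}).
Hypotheses (T_in : forall x, T x \in S) (T_onto : {in S, forall y, exists x, T x = y}).
Hypothesis Tf : forall x, T (f x) = g (T x).

Let TB := morphB_of_morphD TD.
Let fB := morphB_of_morphD fD.

Lemma intertwined_in : {in S, forall y, g y \in S}.
Proof. by move=> _ /T_onto[x <-]; rewrite -Tf. Qed.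

Lemma intertwined_unique (l : F -> F) :
  (forall x, T (f x) = l (T x)) -> {in S, l =1 g}.
Proof. by move=> Tl _ /T_onto[x <-]; rewrite -Tl Tf. Qed.

Lemma intertwined0 : g 0 = 0.
Proof. by rewrite -(subrr (T 0)) -TB -Tf fB !subrr. Qed.

Lemma induced_well_defined_intertwined : induced_well_defined [set x | T x == 0] f.
Proof. by move=> x y; rewrite !inE -fB Tf => /eqP ->; rewrite intertwined0. Qed.

Lemma intertwined_additive : {in S &, forall x y, g (x + y) = g x + g y}.
Proof. by move=> _ _ /T_onto[x <-] /T_onto[y <-]; rewrite -TD -!Tf fD TD. Qed.

Lemma induced_bijective_intertwinedP :
  induced_bijective [set x | T x == 0] f <-> F2_lin_aut S g.
Proof.
split=> [[f_inj f_onto] | [_ _ g_inj g_onto]].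
  split; [exact: intertwined_in | exact: intertwined_additive | |].
  - move=> _ _ /T_onto[x <-] /T_onto[y <-] gxy.
    have : x - y \in [set u | T u == 0] by apply: f_inj; rewrite inE TB !Tf gxy subrr.
    by rewrite inE TB subr_eq0 => /eqP.
  - move=> _ /T_onto[y <-]; have [x] := f_onto y; rewrite inE TB subr_eq0 => /eqP fxy.
    by exists (T x); rewrite ?T_in -?Tf.
split=> [x y | y].
  rewrite !inE !TB !Tf !subr_eq0 => /eqP gxy.
  by apply/eqP/g_inj; rewrite ?T_in.
have [_ /T_onto[x <-] gxy] := g_onto _ (T_in y).
by exists x; rewrite inE TB Tf gxy subrr.
Qed.

End Intertwining.

Section Char2.

Variable F : finFieldType.
Hypothesis Hchar : 2%N \in [pchar F].

Lemma frobD k (x y : F) : (x + y) ^+ (2 ^ k) = x ^+ (2 ^ k) + y ^+ (2 ^ k).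
Proof.
elim: k => [|k IH]; first by rewrite !expn0 !expr1.
by rewrite expnSr !exprM IH -!(pFrobenius_autE Hchar) rmorphD.
Qed.

Lemma frob0 k : (0 : F) ^+ (2 ^ k) = 0.
Proof. by rewrite expr0n expn_eq0. Qed.

Lemma frob_sum k (I : Type) (r : seq I) (P : pred I) (h : I -> F) :
  (\sum_(i <- r | P i) h i) ^+ (2 ^ k) = \sum_(i <- r | P i) h i ^+ (2 ^ k).
Proof. exact: (big_morph (fun x : F => x ^+ (2 ^ k)) (frobD k) (frob0 k)). Qed.

Section Trace.

Variables m n : nat.
Hypotheses (Hm : (0 < m)%N) (Hn : (0 < n)%N) (Hcard : #|F| = (2 ^ (m * n))%N).

Local Notation Tr := (Tr m n (F := F)).
Local Notation Fq := (Fq m F).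

Lemma frob_full (x : F) : x ^+ (2 ^ (m * n)) = x.
Proof. by rewrite -Hcard expf_card. Qed.

Lemma Fq_frob_mul (w : F) t r : w \in Fq -> w ^+ (2 ^ (m * t + r)) = w ^+ (2 ^ r).
Proof.
rewrite inE => /eqP wq; rewrite expnD expnM exprM; congr (_ ^+ _).
by elim: t => [|t IH]; rewrite ?expr1 // expnS exprM wq.
Qed.

Lemma TrD x y : Tr (x + y) = Tr x + Tr y.
Proof. by rewrite /Defs.Tr -big_split; apply: eq_bigr => j _; rewrite frobD. Qed.

Lemma Tr0 : Tr 0 = 0.
Proof. by rewrite /Defs.Tr big1 // => j _; rewrite frob0. Qed.

Lemma Tr_sum (I : Type) (r : seq I) (P : pred I) (h : I -> F) :
  Tr (\sum_(i <- r | P i) h i) = \sum_(i <- r | P i) Tr (h i).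
Proof. exact: (big_morph Tr TrD Tr0). Qed.

Lemma Tr_frob y s : Tr (y ^+ (2 ^ s)) = Tr y ^+ (2 ^ s).
Proof. by rewrite /Defs.Tr frob_sum; apply: eq_bigr => j _; rewrite exprAC. Qed.

Lemma Tr_in_Fq y : Tr y \in Fq.
Proof.
rewrite inE /Defs.Tr frob_sum; apply/eqP; move: (frob_full y).
case: n Hn => // n' _ y_full; rewrite big_ord_recr big_ord_recl /=.
rewrite -exprM -expnD -mulnSr y_full addrC muln0 expn0 expr1; congr (_ + _).
by apply: eq_bigr => j _; rewrite -exprM -expnD -mulnSr.
Qed.

Lemma Tr_frobq y : Tr (y ^+ (2 ^ m)) = Tr y.
Proof. by rewrite Tr_frob; have := Tr_in_Fq y; rewrite inE => /eqP. Qed.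

Lemma TrZ w y : w \in Fq -> Tr (w * y) = w * Tr y.
Proof.
move=> w_Fq; rewrite /Defs.Tr mulr_sumr; apply: eq_bigr => j _.
by rewrite exprMn; have := Fq_frob_mul j 0 w_Fq; rewrite addn0 expn0 expr1 => ->.
Qed.

Lemma Tr_twists_indep (I : finType) (e : I -> 'I_m) (d : I -> F) :
  injective e -> (forall z, \sum_i Tr (d i * z) ^+ (2 ^ e i) = 0) ->
  forall i, d i = 0.
Proof.
move=> e_inj vanish i.
pose E i (j : 'I_n) := (e i + m * j)%N.
have E_inj : injective (fun p => 2 ^ E p.1 p.2)%N.
  move=> [i1 j1] [i2 j2] /eqP; rewrite eqn_exp2l // /E /= => /eqP.
  by case/divmod_inj => // /ord_inj/e_inj -> /ord_inj ->.
have E_lt p : (2 ^ E p.1 p.2 < #|F|)%N by rewrite Hcard ltn_exp2l // divmod_lt.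
have vanishE z : \sum_p d p.1 ^+ (2 ^ E p.1 p.2) * z ^+ (2 ^ E p.1 p.2) = 0.
  rewrite -[RHS](vanish z).
  rewrite -(pair_bigA _ (fun i j => d i ^+ (2 ^ E i j) * z ^+ (2 ^ E i j))) /=.
  apply: eq_bigr => i' _; rewrite -Tr_frob; apply: eq_bigr => j _.
  by rewrite -exprMn -!exprM -!expnD.
have /eqP := vanishing_sparse_poly_coef_eq0 E_inj E_lt vanishE (i, Ordinal Hn).
by rewrite expf_eq0 expn_gt0 => /eqP.
Qed.

Lemma Tr_nonzero : exists x, Tr x != 0.
Proof.
apply/existsP; apply: contraT; rewrite negb_exists => /forallP Tr_eq0.
have one0 : (1 : F) = 0.
  apply: (@Tr_twists_indep 'I_1 (fun=> Ordinal Hm) (fun=> 1) _ _ ord0).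
  - by move=> i j _; rewrite !ord1.
  - by move=> z; rewrite big_ord1 expn0 expr1 mul1r; apply/eqP/negPn/Tr_eq0.
by move/eqP: one0; rewrite oner_eq0.
Qed.

Lemma Tr_surj y : y \in Fq -> exists x, Tr x = y.
Proof.
move=> y_Fq; have [x0 Tx0] := Tr_nonzero.
have := Tr_in_Fq x0; rewrite inE => /eqP Tx0_q.
exists (y / Tr x0 * x0); rewrite TrZ ?divfK // inE exprMn exprVn Tx0_q.
by move: y_Fq; rewrite inE => /eqP ->.
Qed.

Section Adjoint.

Variable a : nat -> nat -> F.

Local Notation L' := (Ladj m n a).
Local Notation c i := (Li m n a i 1).

Lemma Li1 i : c i = \sum_(j < n) a i j.
Proof. by apply: eq_bigr => j _; rewrite expr1n mulr1. Qed.

Lemma LadjD x y : L' (x + y) = L' x + L' y.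
Proof.
by rewrite /Ladj -big_split; apply: eq_bigr => k _; rewrite mulrDr /frobinv frobD.
Qed.

Lemma Ladj_split x : L' x =
  \sum_(j < n) \sum_(i < m) (a i j * x) ^+ (2 ^ (m * n - (i + m * j))).
Proof.
rewrite /Ladj (sum_ord_mul (fun k => frobinv m n k (Lcoef m a k * x))).
apply: eq_bigr => j _; apply: eq_bigr => i _.
have lt_ij := divmod_lt (ltn_ord i) (ltn_ord j).
rewrite /frobinv /Lcoef (modn_small lt_ij) addnC mulnC modnMDl divnMDl //.
by rewrite modn_small ?divn_small ?addn0.
Qed.

Lemma Tr_Ladj x : Tr (L' x) = \sum_(i < m) Tr (c i * x) ^+ (2 ^ (m - i)).
Proof.
rewrite Ladj_split Tr_sum; under eq_bigr do rewrite Tr_sum.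
rewrite exchange_big /=; apply: eq_bigr => i _.
rewrite Li1 mulr_suml Tr_sum frob_sum; apply: eq_bigr => j _.
have lt_i := ltn_ord i; have lt_j := ltn_ord j.
have -> : (m * n - (i + m * j) = m * (n - j.+1) + (m - i))%N.
  have : (m * j.+1 <= m * n)%N by rewrite leq_pmul2l.
  by rewrite mulnBr mulnS; lia.
by rewrite Tr_frob Fq_frob_mul // Tr_in_Fq.
Qed.

Lemma Tr_Ladj_lmap : (forall i, (i < m)%N -> c i \in Fq) ->
  forall x, Tr (L' x) = lmap m n a (Tr x).
Proof. by move=> c_Fq x; rewrite Tr_Ladj; apply: eq_bigr => i _; rewrite TrZ ?c_Fq. Qed.

Lemma Tr_mul_frobqD w z :
  Tr (w * (z ^+ (2 ^ m) + z)) = Tr ((w ^+ (2 ^ (m * n - m)) + w) * z).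
Proof.
rewrite mulrDr mulrDl !TrD -[Tr (w ^+ _ * z)]Tr_frobq exprMn -exprM -expnD.
by rewrite subnK ?frob_full ?leq_pmulr.
Qed.

Lemma coef_in_Fq_of_KerTr_stable :
  (forall x, Tr x = 0 -> Tr (L' x) = 0) -> forall i, (i < m)%N -> c i \in Fq.
Proof.
move=> stable i0 lt_i0.
pose d (i : 'I_m) := c i ^+ (2 ^ (m * n - m)) + c i.
have d_sq z : (\sum_(i < m) Tr (d i * z) ^+ (2 ^ rev_ord i)) ^+ (2 ^ 1) = 0.
  rewrite frob_sum -[RHS](stable (z ^+ (2 ^ m) + z)); last first.
    by rewrite TrD Tr_frobq addrr_pchar2.
  rewrite Tr_Ladj; apply: eq_bigr => i _.
  by rewrite Tr_mul_frobqD -exprM -expnD addn1 /= subnSK.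
have d0 : forall i, d i = 0.
  apply: (Tr_twists_indep rev_ord_inj) => z.
  by apply/eqP; move/eqP: (d_sq z); rewrite expf_eq0 => /andP[].
move/eqP: (d0 (Ordinal lt_i0)); rewrite addr_eq0 (oppr_pchar2 Hchar) /= => /eqP c_fix.
by rewrite inE -{1}c_fix -exprM -expnD subnK ?frob_full ?leq_pmulr.
Qed.

Lemma KerTr_stableP :
  Ladj m n a @: KerTr m n F \subset KerTr m n F <->
  (forall i, (i < m)%N -> c i \in Fq).
Proof.
split=> [/subsetP stable | c_Fq].
  apply: coef_in_Fq_of_KerTr_stable => x Tx.
  have : L' x \in KerTr m n F by apply/stable/imset_f; rewrite inE Tx.
  by rewrite inE => /eqP.
apply/subsetP => _ /imsetP[x + ->]; rewrite !inE Tr_Ladj_lmap // => /eqP ->.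
by rewrite /lmap big1 // => i _; rewrite mulr0 frob0.
Qed.

End Adjoint.
End Trace.
End Char2.

Theorem mainTheorem6 (m n : nat) (F : finFieldType)
    (Hm : (0 < m)%N) (Hn : (0 < n)%N)
    (Hchar : 2%N \in [pchar F]) (Hcard : #|F| = (2 ^ (m * n))%N)
    (a : nat -> nat -> F) :
  (* (i) *)
  ((Ladj m n a @: KerTr m n F \subset KerTr m n F) <->
     (forall i, (i < m)%N -> Li m n a i 1 \in Fq m F)) /\
  ((Ladj m n a @: KerTr m n F \subset KerTr m n F) ->
     [/\ {in Fq m F, forall y, lmap m n a y \in Fq m F},
         (forall x, Tr m n (Ladj m n a x) = lmap m n a (Tr m n x)) &
         (forall l : F -> F, (forall x, Tr m n (Ladj m n a x) = l (Tr m n x)) ->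
            {in Fq m F, l =1 lmap m n a})]) /\
  (* (ii) *)
  ((Ladj m n a @: KerTr m n F \subset KerTr m n F) ->
     induced_well_defined (KerTr m n F) (Ladj m n a) /\
     (induced_bijective (KerTr m n F) (Ladj m n a) <->
        F2_lin_aut (Fq m F) (lmap m n a))) /\
  (* (iii) *)
  (#|Ladj m n a @: KerTr m n F| = #|KerTr m n F| <->
     KerTr m n F :&: KerLadj m n a = [set 0]).
Proof.
have stableP := KerTr_stableP Hchar Hm Hn Hcard a.
have lmap_intertwines st := Tr_Ladj_lmap Hchar Hm Hn Hcard (proj1 stableP st).
have Tr_add := TrD Hchar m n; have Ladj_add := LadjD Hchar m n a.
have Tr_in := Tr_in_Fq Hchar Hn Hcard; have Tr_onto := Tr_surj Hchar Hm Hn Hcard.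
split; first exact: stableP.
split.
  move=> /lmap_intertwines Tf.
  split; [exact: intertwined_in Tr_onto Tf | exact: Tf |].
  exact: intertwined_unique Tr_onto Tf.
split; last exact: card_imset_kernel Tr_add Ladj_add.
move=> /lmap_intertwines Tf.
split; first exact: induced_well_defined_intertwined Tr_add Ladj_add Tf.
exact: induced_bijective_intertwinedP Tr_add Ladj_add Tr_in Tr_onto Tf.
Qed.
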